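(* Let $\mathbb{F}$ be a field of characteristic zero, $d\ge 2$, $n\ge 0$, and let $a_{k,j}\in\mathbb{F}$ ($2\le k\le n$, $2\le j\le d$). Let $L_0,\dots,L_n$ be defined by $L_0=1$, $L_1=x_1$ and, for $2\le k\le n$, $$L_k=\Psi_1(M_1)+\sum_{j=2}^d\Psi_j\big((M_j)_{i_1=\dots=i_{j-1}=0}\big)+a_{k,2}x_2+\dots+a_{k,d}x_d,\quad M_1=L_{k-1},\ M_j=\sum_{t=2}^{k-1}a_{t,j}L_{k-t}.$$ Then for every $k=0,1,\dots,n$, $$L_k=\sum\frac{a_{2,2}^{\gamma_{2,2}}\cdots a_{n,2}^{\gamma_{2,n}}\cdots a_{2,d}^{\gamma_{d,2}}\cdots a_{n,d}^{\gamma_{d,n}}}{\gamma_{1,1}!\,\gamma_{2,2}!\cdots\gamma_{2,n}!\cdots\gamma_{d,2}!\cdots\gamma_{d,n}!}\,x_1^{\gamma_{1,1}}x_2^{\gamma_{2,2}+\dots+\gamma_{2,n}}\cdots x_d^{\gamma_{d,2}+\dots+\gamma_{d,n}},$$ where the sum runs over all nonnegative integers $\gamma_{1,1}$, $\gamma_{s,j}$ ($2\le s\le d$, $2\le j\le n$) with $\gamma_{1,1}+2(\gamma_{2,2}+\dots+\gamma_{d,2})+\dots+n(\gamma_{2,n}+\dots+\gamma_{d,n})=k$.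
   Context: $\Psi_j$ is the linear operator on $\mathbb{F}[x_1,\dots,x_d]$ with $\Psi_j(x_1^{\alpha_1}\cdots x_d^{\alpha_d})=\frac{1}{\alpha_j+1}x_1^{\alpha_1}\cdots x_j^{\alpha_j+1}\cdots x_d^{\alpha_d}$; $(M)_{i_1=\dots=i_{j-1}=0}$ is the sum of the terms of $M$ containing none of $x_1,\dots,x_{j-1}$. Convention: $0^0=1$. *)

From HB Require Import structures.
From mathcomp Require Import all_boot all_order all_algebra.
From mathcomp Require Import multinomials.mpoly.
Set Implicit Arguments. Unset Strict Implicit. Unset Printing Implicit Defensive.
Import Order.TTheory GRing.Theory.
Local Open Scope ring_scope.
Local Open Scope mpoly_scope.

(* Variables are indexed 0-based by 'I_d: the paper's x_j is 'X_(j-1). *)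

Definition Psi (F : fieldType) (d : nat) (i : 'I_d) (p : {mpoly F[d]})
  : {mpoly F[d]} :=
  \sum_(m <- msupp p) ((p@_m / ((m i).+1)%:R) *: 'X_[(m + U_(i))%MM]).

(* trunc j p : the sum of the terms of p containing none of the variables
   with 0-based index < j (paper: (M)_{i_1=...=i_j=0}, i.e. containing none
   of x_1,...,x_j). *)
Definition trunc (F : fieldType) (d : nat) (j : nat) (p : {mpoly F[d]})
  : {mpoly F[d]} :=
  \sum_(m <- msupp p | [forall i : 'I_d, (i < j)%N ==> (m i == 0%N)])
     (p@_m *: 'X_[m]).

(* L_k is the coefficient of t^k in exp (x_1 t + \sum_(j, s) a_{j,s} x_s t^j), and the
   multinomial expansion of that coefficient is the stated sum.  The coefficients satisfy
   the recursion defining L_k because of two facts.  In characteristic zero every polynomial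
   f equals f(0) + \sum_j Psi_j ((df/dx_j) with x_1, ..., x_(j-1) set to 0).  And the
   coefficient E_k of t^k in exp (\sum_i u_i t^(w_i)) satisfies
   dE_k/dx_j = \sum_i (du_i/dx_j) E_(k - w_i). *)

From HB Require Import structures.
From mathcomp Require Import all_boot all_order all_algebra.
From mathcomp Require Import multinomials.mpoly.
From mathcomp Require Import multinomials.ssrcomplements.
From mathcomp Require Import zify.
Set Implicit Arguments.
Unset Strict Implicit.
Unset Printing Implicit Defensive.
Import Order.TTheory GRing.Theory.
Local Open Scope ring_scope.

Lemma big_option (R : Type) (idx : R) (op : Monoid.com_law idx) (T : finType)
    (f : option T -> R) :
  \big[op/idx]_(o : option T) f o = op (f None) (\big[op/idx]_(x : T) f (Some x)).
Proof.
rewrite (bigD1 None) //=; congr (op _ _).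
rewrite (reindex_omap Some id) //=; last by case.
by apply: eq_bigl => x; rewrite eqxx.
Qed.

Lemma big_pair (R : Type) (idx : R) (op : Monoid.com_law idx) (I J : finType)
    (f : I * J -> R) :
  \big[op/idx]_(x : I * J) f x = \big[op/idx]_(i : I) \big[op/idx]_(j : J) f (i, j).
Proof. by rewrite pair_bigA; apply: eq_bigr => -[]. Qed.

Lemma big_ord_nat_cond (V : nmodType) n k (f : nat -> V) : (k <= n)%N ->
  \sum_(j < n.+1) (if (2 <= j <= k)%N then f j else 0) = \sum_(2 <= j < k.+1) f j.
Proof.
move=> le_kn; rewrite big_geq_mkord (big_ord_widen_cond n.+1) // [RHS]big_mkcond /=.
by apply: eq_bigr => j _; rewrite ltnS.
Qed.

Lemma big_ord2_restrict (R : Type) (idx : R) (op : Monoid.com_law idx) (d m : nat)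
    (f : 'I_d -> 'I_m -> R) :
  (forall (s : 'I_d) (j : 'I_m), (s == 0%N :> nat) || (j < 2)%N -> f s j = idx) ->
  \big[op/idx]_(s < d) \big[op/idx]_(j < m) f s j
  = \big[op/idx]_(s < d | (1 <= s)%N) \big[op/idx]_(j < m | (2 <= j)%N) f s j.
Proof.
move=> f0; rewrite [RHS]big_mkcond; apply: eq_bigr => s _.
case: (posnP s) => [s0|s_gt0] /=; first by apply: big1 => j _; apply: f0; rewrite s0.
rewrite [RHS]big_mkcond; apply: eq_bigr => j _.
by case: (ltnP j 2) => hj //=; apply: f0; rewrite hj orbT.
Qed.

Section MonomialLinearExtension.
Variables (F : fieldType) (d : nat).
Implicit Types (p : {mpoly F[d]}) (g : 'X_{1..d} -> {mpoly F[d]}).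

Definition mlinext g p : {mpoly F[d]} := \sum_(m <- msupp p) p@_m *: g m.

Lemma mlinextE g p k : (msize p <= k)%N ->
  mlinext g p = \sum_(m : 'X_{1..d < k}) p@_m *: g m.
Proof.
move=> le_pk; rewrite /mlinext (big_mksub 'X_{1..d < k}) /=; first last.
- by move=> x /msize_mdeg_lt/leq_trans/(_ le_pk).
- exact: msupp_uniq.
by rewrite big_rmcond //= => m /memN_msupp_eq0 ->; rewrite scale0r.
Qed.

Lemma mlinext_is_linear g : linear (mlinext g).
Proof.
move=> c p q; set k := maxn (msize p) (maxn (msize q) (msize (c *: p + q))).
rewrite !(@mlinextE _ _ k) ?leq_maxl // ?(leq_trans (leq_maxl _ _) (leq_maxr _ _))
  ?(leq_trans (leq_maxr _ _) (leq_maxr _ _)) //.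
rewrite scaler_sumr -big_split /=; apply/eq_bigr=> m _.
by rewrite !scalerA -scalerDl mcoeffD mcoeffZ.
Qed.

Lemma mlinextX g m : mlinext g 'X_[m] = g m.
Proof. by rewrite /mlinext msuppX big_seq1 mcoeffX eqxx scale1r. Qed.

Definition vanish_below (j : nat) (m : 'X_{1..d}) :=
  [forall i : 'I_d, (i < j)%N ==> (m i == 0%N)].

Lemma vanish_belowP j (m : 'X_{1..d}) :
  reflect (forall i : 'I_d, (i < j)%N -> m i = 0%N) (vanish_below j m).
Proof.
apply: (iffP forallP) => h i; last by apply/implyP => /h ->.
by move/implyP: (h i) => hi /hi /eqP.
Qed.

Lemma Psi_mlinext (i : 'I_d) p :
  Psi i p = mlinext (fun m => (m i).+1%:R^-1 *: 'X_[m + U_(i)]) p.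
Proof. by apply: eq_bigr => m _; rewrite scalerA. Qed.

Lemma trunc_mlinext j p :
  trunc j p = mlinext (fun m => if vanish_below j m then 'X_[m] else 0) p.
Proof.
rewrite /trunc /mlinext big_mkcond; apply: eq_bigr => m _.
by rewrite /vanish_below; case: ifP; rewrite ?scaler0.
Qed.

End MonomialLinearExtension.

Lemma Psi_is_linear (F : fieldType) (d : nat) (i : 'I_d) : linear (@Psi F d i).
Proof. by move=> c p q; rewrite !Psi_mlinext; exact: mlinext_is_linear. Qed.

HB.instance Definition _ (F : fieldType) (d : nat) (i : 'I_d) :=
  GRing.isLinear.Build F {mpoly F[d]} {mpoly F[d]} _ (@Psi F d i) (@Psi_is_linear F d i).

Lemma trunc_is_linear (F : fieldType) (d j : nat) : linear (@trunc F d j).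
Proof. by move=> c p q; rewrite !trunc_mlinext; exact: mlinext_is_linear. Qed.

HB.instance Definition _ (F : fieldType) (d j : nat) :=
  GRing.isLinear.Build F {mpoly F[d]} {mpoly F[d]} _ (@trunc F d j) (@trunc_is_linear F d j).

Section PsiTrunc.
Variables (F : fieldType) (d : nat).
Implicit Types (p : {mpoly F[d]}) (m : 'X_{1..d}).

Lemma PsiX (i : 'I_d) m :
  Psi i ('X_[m] : {mpoly F[d]}) = (m i).+1%:R^-1 *: 'X_[m + U_(i)].
Proof. by rewrite Psi_mlinext mlinextX. Qed.

Lemma truncX j m :
  trunc j ('X_[m] : {mpoly F[d]}) = if vanish_below j m then 'X_[m] else 0.
Proof. by rewrite trunc_mlinext mlinextX. Qed.

Lemma trunc0 p : trunc 0 p = p.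
Proof.
rewrite trunc_mlinext /mlinext [RHS]mpolyE; apply: eq_bigr => m _.
by rewrite (_ : vanish_below 0 m) //; apply/vanish_belowP => i; rewrite ltn0.
Qed.

Lemma Psi_trunc1 (j : 'I_d) : Psi j (trunc j 1) = 'X_j :> {mpoly F[d]}.
Proof.
rewrite -mpolyX0 truncX.
have -> : vanish_below j (0%MM : 'X_{1..d}) by apply/vanish_belowP => i _; rewrite mnm0E.
by rewrite PsiX mnm0E invr1 scale1r add0m.
Qed.

Lemma mderivXi (i j : 'I_d) : mderiv j ('X_i : {mpoly F[d]}) = (i == j)%:R.
Proof.
rewrite mderivX mnm1E; case: eqP => [->|_]; last by rewrite scale0r.
by rewrite (_ : (U_(j) - U_(j))%MM = 0%MM) ?mpolyX0 ?scale1r //; apply/mnmP => k;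
  rewrite mnmBE subnn mnm0E.
Qed.

Hypothesis charF0 : [pchar F] =i pred0.

Lemma natr_neq0 k : (0 < k)%N -> k%:R != 0 :> F.
Proof. by move=> k_gt0; rewrite (pcharf0P F).1 // -lt0n. Qed.

(* Only the least j with [m j > 0] survives the truncation, and there Psi j undoes
   d/dx_j on 'X_[m]. *)
Lemma Psi_trunc_mderivX m :
  (('X_[m] : {mpoly F[d]})@_0)%:MP + \sum_(j < d) Psi j (trunc j (mderiv j 'X_[m])) = 'X_[m].
Proof.
under eq_bigr do rewrite mderivX !linearZ /= truncX.
have [->|m0] := eqVneq m 0%MM.
  by rewrite mcoeffX eqxx big1 ?addr0 ?mpolyX0 // => j _; rewrite mnm0E scale0r.
rewrite mcoeffX (negbTE m0) add0r.
have [i0 hi0] : exists i, (0 < m i)%N.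
  case: (pickP (fun i => 0 < m i)%N) => [i hi|h]; first by exists i.
  by case/eqP: m0; apply/mnmP => i; rewrite mnm0E; move: (h i); case: (m i).
case: (@arg_minnP _ i0 (fun i => 0 < m i)%N (fun i : 'I_d => val i) hi0) => j0 hj0 hmin.
rewrite (bigD1 j0) //= big1 ?addr0.
  have -> : vanish_below j0 (m - U_(j0))%MM.
    apply/vanish_belowP => i hi; rewrite mnmBE mnm1E.
    by case: (posnP (m i)) => [->//|/hmin]; rewrite leqNgt hi.
  rewrite PsiX scalerA mnmBE mnm1E eqxx subn1 prednK // mulfV ?natr_neq0 // scale1r.
  by rewrite submK //; apply/mnm_lepP => i; rewrite mnm1E; case: eqP => // <-.
move=> j hj; case: (posnP (m j)) => [->|hmj]; first by rewrite scale0r.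
have hlt : (j0 < j)%N.
  by rewrite ltn_neqAle hmin // andbT; apply: contra hj => /eqP/val_inj ->.
have -> : vanish_below j (m - U_(j))%MM = false.
  apply/negbTE/vanish_belowP => /(_ j0 hlt).
  by rewrite mnmBE mnm1E (negbTE hj) subn0 => hm0; move: hj0; rewrite hm0.
by rewrite linear0 scaler0.
Qed.

Lemma mpoly_Psi_trunc_mderiv p :
  p = (p@_0)%:MP + \sum_(j < d) Psi j (trunc j (mderiv j p)).
Proof.
elim/mpolyind: p => [|c m p _ _ ih].
  by rewrite mcoeff0 big1 ?addr0 // => j _; rewrite !linear0.
rewrite -{1}(Psi_trunc_mderivX m) {1}ih mcoeffD mcoeffZ rmorphD /= mpolyCM.
rewrite -mul_mpolyC mulrDr mulr_sumr addrACA -big_split /=; congr (_ + _).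
by apply: eq_bigr => j _; rewrite mul_mpolyC !linearD !linearZ.
Qed.

End PsiTrunc.

Section MderivProduct.
Variables (R : comRingType) (d : nat) (j : 'I_d).

Lemma mderiv_prod_seq (I : eqType) (f : I -> {mpoly R[d]}) (r : seq I) : uniq r ->
  mderiv j (\prod_(x <- r) f x) = \sum_(x <- r) mderiv j (f x) * \prod_(y <- r | y != x) f y.
Proof.
elim: r => [|a r ih] /=.
  by rewrite !big_nil -mpolyX0 mderivX mnm0E scale0r.
case/andP => anr ur; rewrite !big_cons mderivM ih // eqxx /=; congr (_ + _).
  congr (_ * _); rewrite big_seq_cond [RHS]big_seq_cond; apply: eq_bigl => y.
  by case: (boolP (y \in r)) => // yr; rewrite andbT; apply/esym/eqP => ya;
    move: anr; rewrite -ya yr.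
rewrite mulr_sumr !big_seq; apply: eq_bigr => x xr.
rewrite big_cons (_ : (a != x) = true); last by apply/eqP => ax; move: anr; rewrite ax xr.
by rewrite mulrCA.
Qed.

Lemma mderiv_prod (I : finType) (f : I -> {mpoly R[d]}) :
  mderiv j (\prod_x f x) = \sum_x mderiv j (f x) * \prod_(y | y != x) f y.
Proof. exact/mderiv_prod_seq/index_enum_uniq. Qed.

Lemma mderivXn (p : {mpoly R[d]}) k :
  mderiv j (p ^+ k) = k%:R *: (p ^+ k.-1 * mderiv j p).
Proof.
elim: k => [|k ih]; first by rewrite scale0r expr0 -mpolyX0 mderivX mnm0E scale0r.
rewrite exprS mderivM ih /=; case: k ih => [|k] ih.
  by rewrite expr0 !mulr1 scale0r mulr0 addr0 scale1r mul1r.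
rewrite -scalerAr mulrA -exprS /= [mderiv j p * _]mulrC.
by rewrite -{1}(scale1r (p ^+ k.+1 * mderiv j p)) -scalerDl -(add1n k.+1) natrD.
Qed.

End MderivProduct.

Section ExponentialCoefficients.
Variables (F : fieldType) (d : nat) (I : finType) (B : nat).
Implicit Types (g : {ffun I -> 'I_B.+1}) (i : I).

Definition ffun_incr i g : {ffun I -> 'I_B.+1} :=
  [ffun x => if x == i then inord (g i).+1 else g x].
Definition ffun_decr i g : {ffun I -> 'I_B.+1} :=
  [ffun x => if x == i then inord (g i).-1 else g x].

Lemma ffun_incrE i g x :
  val (ffun_incr i g x) = if x == i then (if (g i < B)%N then (g i).+1 else 0%N) else g x.
Proof. by rewrite ffunE; case: eqP => // _; rewrite /inord val_insubd. Qed.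

Lemma ffun_incrK i g : (g i < B)%N -> ffun_decr i (ffun_incr i g) = g.
Proof.
move=> hb; apply/ffunP => x; rewrite ffunE; case: eqP => [->|hx]; apply/val_inj.
  by rewrite /= ffun_incrE eqxx hb /= inordK.
by rewrite ffun_incrE; case: eqP hx.
Qed.

Lemma ffun_decrK i g : (0 < g i)%N -> ffun_incr i (ffun_decr i g) = g.
Proof.
move=> hg; apply/ffunP => x; rewrite ffunE; case: eqP => [->|hx]; last first.
  by rewrite ffunE; case: eqP.
apply/val_inj; rewrite ffunE eqxx /= (inordK (leq_ltn_trans (leq_pred _) (ltn_ord _))).
by rewrite prednK // inordK.
Qed.

Variable w : I -> nat.
Hypothesis w_gt0 : forall i, (0 < w i)%N.

Definition weight g : nat := (\sum_i w i * g i)%N.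

Lemma leq_weight g i : (w i * g i <= weight g)%N.
Proof. by rewrite /weight (bigD1 i) //= leq_addr. Qed.

Lemma leq_exp_weight g i : (g i <= weight g)%N.
Proof. by apply: leq_trans (leq_weight g i); rewrite leq_pmull. Qed.

Lemma weight_incr g i : (g i < B)%N -> weight (ffun_incr i g) = (weight g + w i)%N.
Proof.
move=> hb; rewrite /weight (bigD1 i) //= [in RHS](bigD1 i) //= ffun_incrE eqxx hb.
rewrite (eq_bigr (fun x => w x * g x)%N); first by rewrite mulnS; lia.
by move=> x /negbTE hx; rewrite ffun_incrE hx.
Qed.

Lemma sum_weight_incr (V : nmodType) (phi : {ffun I -> 'I_B.+1} -> V) k i : (k <= B)%N ->
  \sum_(g | (weight g == k) && (0 < g i)%N) phi g
  = if (w i <= k)%N then \sum_(g | weight g == (k - w i)%N) phi (ffun_incr i g) else 0.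
Proof.
move=> le_kB; rewrite (reindex_onto (ffun_incr i) (ffun_decr i)) /=; last first.
  by move=> g /andP[_]; exact: ffun_decrK.
case: leqP => hwk; last first.
  apply: big_pred0 => g; apply/negbTE/andP => -[/andP[/eqP hk hpos] _].
  by have := leq_weight (ffun_incr i g) i; rewrite hk; nia.
apply: eq_bigl => g; case: (ltnP (g i) B) => hb.
  rewrite weight_incr // ffun_incrK // eqxx andbT ffun_incrE eqxx hb /= andbT.
  by apply/eqP/eqP; lia.
rewrite ffun_incrE eqxx (ltnNge (g i)) hb /= andbF andFb; apply/esym/negbTE/eqP => hg.
by have := leq_exp_weight g i; have := w_gt0 i; lia.
Qed.

Variable u : I -> {mpoly F[d]}.

(* The coefficient of t^k in exp (\sum_i u i t^(w i)), as long as k <= B. *)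
Definition exp_coef k : {mpoly F[d]} :=
  \sum_(g | weight g == k) ((\prod_i (g i)`!)%N%:R^-1 *: \prod_i u i ^+ g i).

Lemma exp_coef0 : exp_coef 0 = 1.
Proof.
rewrite /exp_coef (big_pred1 [ffun=> ord0]).
  rewrite !big1 ?invr1 ?scale1r // => i _; by rewrite ffunE.
move=> g /=; rewrite /weight sum_nat_eq0; apply/forallP/eqP => [h|->].
  apply/ffunP => x; rewrite ffunE; apply/val_inj => /=.
  by move: (h x) (w_gt0 x); rewrite muln_eq0 => /orP[/eqP->|/eqP].
by move=> x; rewrite ffunE muln0.
Qed.

Lemma mcoeff0_exp_coef k : (forall i, (u i)@_0 = 0) -> (0 < k)%N -> (exp_coef k)@_0 = 0.
Proof.
move=> u0 k_gt0; rewrite /exp_coef raddf_sum big1 // => g /eqP hg; rewrite /= mcoeffZ.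
have [i gi_gt0] : exists i, (0 < g i)%N.
  case: (pickP (fun i => 0 < g i)%N) => [i hi|g0]; first by exists i.
  move: k_gt0; rewrite -hg /weight big1 // => i _.
  by move: (g0 i) => /negbT; rewrite -leqNgt leqn0 => /eqP->; rewrite muln0.
rewrite [\prod_i u i ^+ g i](bigD1 i) //= (mcoeff0_is_multiplicative d F).1.
by rewrite -(prednK gi_gt0) exprS (mcoeff0_is_multiplicative d F).1 u0 !mul0r mulr0.
Qed.

Hypothesis charF0 : [pchar F] =i pred0.

Lemma exp_coef_mderiv_term k i q : (k <= B)%N ->
  \sum_(g | weight g == k) ((\prod_x (g x)`!)%N%:R^-1 *:
      (((g i)%:R *: (u i ^+ (g i).-1 * q)) * \prod_(y | y != i) u y ^+ g y))
  = if (w i <= k)%N then q * exp_coef (k - w i)%N else 0.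
Proof.
move=> le_kB; rewrite (bigID (fun g => 0 < g i)%N) /= [X in _ + X]big1 ?addr0; last first.
  by move=> g /andP[_]; rewrite -leqNgt leqn0 => /eqP->; rewrite scale0r mul0r scaler0.
rewrite sum_weight_incr //; case: leqP => [hwk|_] //.
rewrite /exp_coef mulr_sumr; apply: eq_bigr => g /eqP hg.
have hb : (g i < B)%N.
  by rewrite (leq_ltn_trans (leq_exp_weight g i)) // hg; have := w_gt0 i; lia.
have incr_ne x : x != i -> ffun_incr i g x = g x.
  by move=> hx; apply/val_inj; rewrite ffun_incrE (negbTE hx).
have incr_i : val (ffun_incr i g i) = (g i).+1 by rewrite ffun_incrE eqxx hb.
rewrite incr_i /= (bigD1 i) //= [in RHS](bigD1 i) //= incr_i.
rewrite (eq_bigr (fun y => u y ^+ g y)); last by move=> y /incr_ne ->.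
rewrite (eq_bigr (fun y => (g y)`!)); last by move=> y /incr_ne ->.
rewrite [\prod_x u x ^+ g x](bigD1 i) // factS -mulnA natrM invfM.
rewrite -scalerAl scalerA mulrAC mulVf ?natr_neq0 // mul1r -scalerAr.
by rewrite mulrA [q * _]mulrC.
Qed.

Lemma exp_coef_mderiv k (j : 'I_d) : (k <= B)%N ->
  mderiv j (exp_coef k)
  = \sum_i (if (w i <= k)%N then mderiv j (u i) * exp_coef (k - w i)%N else 0).
Proof.
move=> le_kB; rewrite [exp_coef k]/exp_coef linear_sum /=.
under eq_bigr do rewrite linearZ /= mderiv_prod scaler_sumr.
rewrite exchange_big /=; apply: eq_bigr => i _.
rewrite -(exp_coef_mderiv_term _ _ le_kB).
by apply: eq_bigr => g _; rewrite mderivXn.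
Qed.

Lemma exp_coef_rec k : (forall i, (u i)@_0 = 0) -> (0 < k <= B)%N ->
  exp_coef k = \sum_(j < d) Psi j (trunc j
      (\sum_i (if (w i <= k)%N then mderiv j (u i) * exp_coef (k - w i)%N else 0))).
Proof.
move=> u0 /andP[k_gt0 le_kB].
rewrite {1}(mpoly_Psi_trunc_mderiv charF0 (exp_coef k)) mcoeff0_exp_coef // add0r.
by apply: eq_bigr => j _; rewrite exp_coef_mderiv.
Qed.

End ExponentialCoefficients.

Section GeneratingExponential.
Variables (F : fieldType) (d : nat) (hd : (2 <= d)%N) (n : nat) (a : nat -> nat -> F).

Local Notation x1 := (Ordinal (ltnW hd)).
Local Notation unused s j := ((s == 0%N :> nat) || (j < 2)%N).

(* None indexes the term x_1 t of the exponent and Some (s, j) the term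
   a_{j,s+1} x_{s+1} t^j; the unused slots carry the term 0 and a dummy positive weight. *)
Definition gen_weight (o : option ('I_d * 'I_n.+1)) : nat :=
  if o is Some (_, j) then maxn j 1 else 1.

Definition gen_term (o : option ('I_d * 'I_n.+1)) : {mpoly F[d]} :=
  match o with
  | None => 'X_x1
  | Some (s, j) => if unused s j then 0 else a j s.+1 *: 'X_s
  end.

Local Notation E := (exp_coef n gen_weight gen_term).

Lemma gen_weight_gt0 o : (0 < gen_weight o)%N.
Proof. by case: o => [[s j]|] //=; rewrite leq_max orbT. Qed.

Lemma mcoeff0_gen_term o : (gen_term o)@_0 = 0.
Proof.
case: o => [[s j]|] /=; last by rewrite mcoeffX mnm1_eq0.
by case: ifP => _; rewrite ?mcoeff0 // mcoeffZ mcoeffX mnm1_eq0 mulr0.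
Qed.

Lemma gen_sum_mderiv_x1 k : (0 < k)%N ->
  \sum_o (if (gen_weight o <= k)%N then
            mderiv x1 (gen_term o) * E (k - gen_weight o)%N else 0)
  = E k.-1.
Proof.
move=> k_gt0; rewrite big_option /= big1 ?addr0.
  by rewrite k_gt0 mderivXi eqxx mul1r subn1.
case=> s j _ /=; case: ifP => // _; case: ifP => hsj; first by rewrite linear0 mul0r.
rewrite linearZ /= mderivXi (_ : (s == _) = false) ?scaler0 ?mul0r //.
by apply/negbTE/eqP => hs; move: hsj; rewrite hs.
Qed.

Lemma gen_sum_mderiv k (t : 'I_d) : (1 <= t)%N -> (k <= n)%N ->
  \sum_o (if (gen_weight o <= k)%N then
            mderiv t (gen_term o) * E (k - gen_weight o)%N else 0)
  = \sum_(2 <= j < k.+1) a j t.+1 *: E (k - j)%N.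
Proof.
move=> t_gt0 le_kn; rewrite big_option /= mderivXi.
rewrite (_ : (x1 == t) = false); last by apply/negbTE/eqP => h; move: t_gt0; rewrite -h.
rewrite mul0r if_same add0r -(big_ord_nat_cond _ le_kn) big_pair /=.
rewrite (bigD1 t) //= [X in _ + X]big1 ?addr0; last first.
  move=> s hs; apply: big1 => j _; case: ifP => // _.
  case: ifP => _; first by rewrite linear0 mul0r.
  by rewrite linearZ /= mderivXi (negbTE hs) scaler0 mul0r.
apply: eq_bigr => j _; case: (ltnP j 2) => hj /=.
  by rewrite orbT linear0 mul0r if_same.
rewrite orbF (_ : (t == 0%N :> nat) = false); last by apply/negbTE; rewrite -lt0n.
rewrite (_ : maxn j 1 = j); last by apply/maxn_idPl; lia.
by rewrite linearZ /= mderivXi eqxx; case: ifP => // _; rewrite -scalerAl mul1r.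
Qed.

Hypothesis charF0 : [pchar F] =i pred0.

Lemma exp_coef_gen_rec k : (0 < k <= n)%N ->
  E k = Psi x1 (E k.-1)
    + \sum_(j : 'I_d | (1 <= j)%N)
        Psi j (trunc j (\sum_(2 <= t < k) (a t j.+1 *: E (k - t)%N)))
    + \sum_(j : 'I_d | (1 <= j)%N) (a k j.+1 *: 'X_j *+ (1 < k)%N).
Proof.
case/andP=> k_gt0 le_kn.
rewrite exp_coef_rec //; [|exact: gen_weight_gt0|exact: mcoeff0_gen_term|by rewrite k_gt0].
rewrite (bigD1 x1) //= gen_sum_mderiv_x1 // trunc0 -addrA; congr (_ + _).
rewrite -big_split /=; apply: eq_big => j.
  by rewrite -(inj_eq val_inj) /= lt0n.
move=> hj; have j_gt0 : (0 < j)%N.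
  by rewrite lt0n; move: hj; apply: contra => /eqP h; apply/eqP/val_inj.
rewrite gen_sum_mderiv //; case: (ltnP 1 k) => hk.
  rewrite big_nat_recr //= subnn exp_coef0 ?mulr1n; last exact: gen_weight_gt0.
  by rewrite !linearD !linearZ /= Psi_trunc1.
by rewrite (_ : k = 1%N) ?big_geq ?mulr0n ?addr0 //; lia.
Qed.


Lemma recursion_exp_coef (L : nat -> {mpoly F[d]}) :
  L 0%N = 1 ->
  ((1 <= n)%N -> L 1%N = 'X_x1) ->
  (forall k, (2 <= k <= n)%N ->
     L k = Psi x1 (L k.-1)
           + \sum_(j : 'I_d | (1 <= j)%N)
               Psi j (trunc j (\sum_(2 <= t < k) (a t j.+1 *: L (k - t)%N)))
           + \sum_(j : 'I_d | (1 <= j)%N) (a k j.+1 *: 'X_j)) ->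
  forall k, (k <= n)%N -> L k = E k.
Proof.
move=> L0 L1 Lrec; elim/ltn_ind=> -[|[|k]] ih le_kn.
- by rewrite L0 exp_coef0 //; exact: gen_weight_gt0.
- rewrite L1 // exp_coef_gen_rec ?le_kn //= exp_coef0; last exact: gen_weight_gt0.
  rewrite [X in _ + X]big1 ?addr0; last by move=> j _; rewrite mulr0n.
  rewrite big1 ?addr0; last by move=> j _; rewrite big_geq // !linear0.
  by have := Psi_trunc1 F x1; rewrite /= trunc0.
rewrite Lrec ?le_kn // exp_coef_gen_rec ?le_kn //= ih //; last by lia.
congr (_ + _ + _); apply: eq_bigr => j _; congr (Psi _ (trunc _ _)).
by rewrite !big_nat; apply: eq_bigr => t /andP[t_ge2 t_lt]; rewrite ih //; lia.
Qed.

Section Expansion.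
Variable k : nat.
Hypothesis le_kn : (k <= n)%N.

Local Notation exps := {ffun option ('I_d * 'I_n.+1) -> 'I_n.+1}.
Local Notation pexps := ('I_k.+1 * {ffun 'I_d -> {ffun 'I_n.+1 -> 'I_k.+1}})%type.
Implicit Types (p : pexps) (g : exps).

(* The exponents (gamma_{1,1}, gamma_{s,j}) of the statement, as an exponent function on the
   index type of gen_term; all exponents are at most k <= n, so the casts by inord are exact. *)
Definition exps_of_pair p : exps :=
  [ffun o => if o is Some (s, j) then inord (p.2 s j) else inord p.1].

Definition pair_of_exps g : pexps :=
  (inord (g None), [ffun s => [ffun j => inord (g (Some (s, j)))]]).

Lemma exps_of_pair_None p : exps_of_pair p None = p.1 :> nat.
Proof. by rewrite ffunE inordK // (leq_trans (ltn_ord _)). Qed.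

Lemma exps_of_pair_Some p s j : exps_of_pair p (Some (s, j)) = p.2 s j :> nat.
Proof. by rewrite ffunE inordK // (leq_trans (ltn_ord _)). Qed.

Lemma exps_of_pairK : cancel exps_of_pair pair_of_exps.
Proof.
case=> g0 G; congr (_, _); first by apply/val_inj; rewrite /= exps_of_pair_None inordK.
apply/ffunP => s; apply/ffunP => j; apply/val_inj.
by rewrite /= ffunE ffunE exps_of_pair_Some inordK.
Qed.

Lemma pair_of_expsK g : weight gen_weight g = k -> exps_of_pair (pair_of_exps g) = g.
Proof.
move=> wg; apply/ffunP => o.
have le_gk : (g o <= k)%N by rewrite -wg (leq_exp_weight gen_weight_gt0).
apply: ord_inj; case: o le_gk => [[s j]|] le_gk.
  by rewrite exps_of_pair_Some /= !ffunE inordK.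
by rewrite exps_of_pair_None /= inordK.
Qed.

Local Notation zero_on_unused G :=
  [forall s : 'I_d, forall j : 'I_n.+1, unused s j ==> (G s j == 0%N :> nat)].
Local Notation zero_on_unused_exps g :=
  [forall s : 'I_d, forall j : 'I_n.+1, unused s j ==> (g (Some (s, j)) == 0%N :> nat)].

Lemma zero_on_unusedP (G : {ffun 'I_d -> {ffun 'I_n.+1 -> 'I_k.+1}}) :
  reflect (forall (s : 'I_d) (j : 'I_n.+1), unused s j -> G s j = 0%N :> nat)
    (zero_on_unused G).
Proof.
apply: (iffP forallP) => [hG s j|hG s]; last by apply/forallP => j; apply/implyP => /hG ->.
by move/forallP/(_ j)/implyP: (hG s) => h /h /eqP.
Qed.

Lemma zero_on_unused_exps_of_pair p :
  zero_on_unused_exps (exps_of_pair p) = zero_on_unused p.2.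
Proof. by apply: eq_forallb => s; apply: eq_forallb => j; rewrite exps_of_pair_Some. Qed.

Lemma exp_coef_gen_zero_on_unused :
  E k = \sum_(g : exps | (weight gen_weight g == k) && zero_on_unused_exps g)
          ((\prod_o (g o)`!)%N%:R^-1 *: \prod_o gen_term o ^+ g o).
Proof.
rewrite /exp_coef (bigID (fun g : exps => zero_on_unused_exps g)) /=.
rewrite [X in _ + X]big1 ?addr0 // => g /andP[_ /forallPn [s /forallPn [j]]].
rewrite negb_imply => /andP[hu hg].
by rewrite [X in _ *: X](bigD1 (Some (s, j))) //= hu expr0n (negbTE hg) mul0r scaler0.
Qed.

Lemma weight_exps_of_pair p : zero_on_unused p.2 ->
  weight gen_weight (exps_of_pair p)
  = (p.1 + \sum_(s : 'I_d | (1 <= s)%N) \sum_(j : 'I_n.+1 | (2 <= j)%N) j * p.2 s j)%N.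
Proof.
move/zero_on_unusedP => hZ; rewrite /weight big_option /= exps_of_pair_None mul1n big_pair.
rewrite (big_ord2_restrict addn); last by move=> s j hu; rewrite exps_of_pair_Some hZ ?muln0.
congr addn; apply: eq_bigr => s _; apply: eq_bigr => j hj.
by rewrite exps_of_pair_Some (_ : maxn j 1 = j) //; apply/maxn_idPl; lia.
Qed.

Lemma term_exps_of_pair p : zero_on_unused p.2 ->
  (\prod_o (exps_of_pair p o)`!)%N%:R^-1 *: \prod_o gen_term o ^+ exps_of_pair p o
  = ((\prod_(s : 'I_d | (1 <= s)%N) \prod_(j : 'I_n.+1 | (2 <= j)%N) a j s.+1 ^+ p.2 s j)
       / ((p.1`! * \prod_(s : 'I_d | (1 <= s)%N)
                    \prod_(j : 'I_n.+1 | (2 <= j)%N) (p.2 s j)`!)%N)%:R)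
    *: ('X_x1 ^+ p.1
        * \prod_(s : 'I_d | (1 <= s)%N) 'X_s ^+ (\sum_(j : 'I_n.+1 | (2 <= j)%N) p.2 s j)%N).
Proof.
case: p => g0 G /= /zero_on_unusedP hZ.
rewrite !big_option /= exps_of_pair_None !big_pair.
rewrite (big_ord2_restrict muln); last by move=> s j hu; rewrite exps_of_pair_Some /= hZ.
rewrite (big_ord2_restrict *%R); last by move=> s j hu; rewrite exps_of_pair_Some /= hZ.
rewrite [X in (_ * X)%N](eq_bigr (fun s => \prod_(j < n.+1 | 1 < j) (G s j)`!)%N);
  last by move=> s _; apply: eq_bigr => j _; rewrite exps_of_pair_Some.
rewrite [X in _ * X](eq_bigr (fun s : 'I_d => (\prod_(j < n.+1 | (1 < j)%N) a j s.+1 ^+ G s j)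
    *: 'X_s ^+ (\sum_(j < n.+1 | (1 < j)%N) G s j))); last first.
  move=> s s_gt0; rewrite (big_morph _ (exprD _) (expr0 _)) -scaler_prod.
  apply: eq_bigr => j j_ge2; rewrite exps_of_pair_Some /=.
  rewrite (_ : unused s j = false) ?exprZn //.
  by apply/negbTE; rewrite negb_or -lt0n s_gt0 -leqNgt.
by rewrite scaler_prod -scalerAr scalerA mulrC.
Qed.

Lemma exp_coef_gen_expand :
  E k =
  \sum_(g0 : 'I_k.+1)
   \sum_(G : {ffun 'I_d -> {ffun 'I_n.+1 -> 'I_k.+1}}
          | zero_on_unused G
            && (g0 + \sum_(s : 'I_d | (1 <= s)%N)
                       \sum_(j : 'I_n.+1 | (2 <= j)%N) j * G s j == k)%N)
     (((\prod_(s : 'I_d | (1 <= s)%N) \prod_(j : 'I_n.+1 | (2 <= j)%N)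
          a j s.+1 ^+ G s j)
       / ((g0`! * \prod_(s : 'I_d | (1 <= s)%N)
                    \prod_(j : 'I_n.+1 | (2 <= j)%N) (G s j)`!)%N)%:R)
      *: ('X_x1 ^+ g0
          * \prod_(s : 'I_d | (1 <= s)%N)
              'X_s ^+ (\sum_(j : 'I_n.+1 | (2 <= j)%N) G s j)%N)).
Proof.
rewrite exp_coef_gen_zero_on_unused pair_big_dep /=.
rewrite (reindex_onto exps_of_pair pair_of_exps) /=; last first.
  by move=> g /andP[/eqP /pair_of_expsK].
apply: eq_big => -[g0 G] /=.
  rewrite exps_of_pairK eqxx andbT zero_on_unused_exps_of_pair andbC.
  case: (boolP (zero_on_unused G)) => // hZ.
  by rewrite (weight_exps_of_pair (p := (g0, G)) hZ).
by case/andP => /andP[_]; rewrite zero_on_unused_exps_of_pair => /term_exps_of_pair.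
Qed.

End Expansion.

End GeneratingExponential.

Theorem corollary6 (F : fieldType) (hF : [pchar F] =i pred0)
  (d : nat) (hd : (2 <= d)%N) (n : nat) (a : nat -> nat -> F)
  (L : nat -> {mpoly F[d]}) :
  L 0%N = 1 ->
  ((1 <= n)%N -> L 1%N = 'X_(Ordinal (ltnW hd))) ->
  (forall k : nat, (2 <= k <= n)%N ->
     L k = Psi (Ordinal (ltnW hd)) (L k.-1)
           + \sum_(j : 'I_d | (1 <= j)%N)
               Psi j (trunc j (\sum_(2 <= t < k) (a t j.+1 *: L (k - t)%N)))
           + \sum_(j : 'I_d | (1 <= j)%N) (a k j.+1 *: 'X_j)) ->
  forall k : nat, (k <= n)%N ->
  L k =
  \sum_(g0 : 'I_k.+1)
   \sum_(G : {ffun 'I_d -> {ffun 'I_n.+1 -> 'I_k.+1}}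
          | [forall s : 'I_d, forall j : 'I_n.+1,
               ((s == 0%N :> nat) || (j < 2)%N) ==> (G s j == 0%N :> nat)]
            && (g0 + \sum_(s : 'I_d | (1 <= s)%N)
                       \sum_(j : 'I_n.+1 | (2 <= j)%N) j * G s j == k)%N)
     (((\prod_(s : 'I_d | (1 <= s)%N) \prod_(j : 'I_n.+1 | (2 <= j)%N)
          a j s.+1 ^+ G s j)
       / ((g0`! * \prod_(s : 'I_d | (1 <= s)%N)
                    \prod_(j : 'I_n.+1 | (2 <= j)%N) (G s j)`!)%N)%:R)
      *: ('X_(Ordinal (ltnW hd)) ^+ g0
          * \prod_(s : 'I_d | (1 <= s)%N)
              'X_s ^+ (\sum_(j : 'I_n.+1 | (2 <= j)%N) G s j)%N)).
Proof.
move=> L0 L1 Lrec k le_kn.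
by rewrite (recursion_exp_coef hF L0 L1 Lrec le_kn) exp_coef_gen_expand.
Qed.
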